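(* Let $\epsilon=(\epsilon_n)$ and $\epsilon'=(\epsilon'_n)$ be sequences with $0<\epsilon_n,\epsilon'_n\le1$. Then $A^\epsilon\subseteq A^{\epsilon'}$ if and only if there exists $C>0$ with $\epsilon'_n\le C\epsilon_n$ for all $n$. In particular, $A^\epsilon=A^{\epsilon'}$ if and only if there exists $C>0$ with $C^{-1}\epsilon_n\le\epsilon'_n\le C\epsilon_n$ for all $n$.
   Context: For a sequence $\epsilon=(\epsilon_n)$ in $(0,1]$, $A^\epsilon=\{(x_n)\in\mathbb{C}^{\mathbb{N}}:\sup_n|x_n|^{\epsilon_n}<\infty\}$, where $|\cdot|$ is the Euclidean norm on $\mathbb{C}$. *)

From Stdlib Require Import Reals.
From Coquelicot Require Import Coquelicot.
Open Scope R_scope.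

(* real power a^e for a >= 0, e > 0, with the convention 0^e = 0
   (Stdlib's Rpower 0 e would give 1, which is wrong). *)
Definition rpow (a e : R) : R := if Req_EM_T a 0 then 0 else Rpower a e.

Definition A_eps (eps : nat -> R) (x : nat -> C) : Prop :=
  exists M : R, forall n : nat, rpow (Cmod (x n)) (eps n) <= M.

Definition admissible (eps : nat -> R) : Prop :=
  forall n : nat, 0 < eps n <= 1.

(** The inclusion [A^eps ⊆ A^eps'] holds for [eps' <= C eps] because
    [|z|^eps' <= max(1, |z|^eps)^C] for every complex [z].  Conversely the sequence
    [x_n = exp (1 / eps_n)] lies in [A^eps] (all its terms have
    [|x_n|^eps_n = e]), and [|x_n|^eps'_n = exp (eps'_n / eps_n)] is bounded by
    some [M] only if [eps'_n <= ln M * eps_n]. *)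

From Stdlib Require Import Reals Lra.
From Coquelicot Require Import Coquelicot.
Open Scope R_scope.

Definition dominated (eps eps' : nat -> R) : Prop :=
  exists C0 : R, 0 < C0 /\ forall n, eps' n <= C0 * eps n.

Lemma rpow_pos (a e : R) : 0 < a -> rpow a e = Rpower a e.
Proof. now unfold rpow; destruct (Req_EM_T a 0); [lra |]. Qed.

Lemma Rpower_1_l (e : R) : Rpower 1 e = 1.
Proof. now unfold Rpower; rewrite ln_1, Rmult_0_r, exp_0. Qed.

Lemma rpow_le_1 (a e : R) : 0 <= a <= 1 -> 0 <= e -> rpow a e <= 1.
Proof.
  intros Ha He. destruct (Req_dec a 0) as [-> | Ha0].
  - unfold rpow; destruct (Req_EM_T 0 0); lra.
  - rewrite rpow_pos by lra. rewrite <- (Rpower_1_l e).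
    apply Rle_Rpower_l; lra.
Qed.

Lemma rpow_le_scale (a e e' C0 M : R) :
  0 <= a -> 0 <= C0 -> 0 <= e' -> e' <= C0 * e -> rpow a e <= M ->
  rpow a e' <= Rmax 1 (Rpower (Rmax 1 M) C0).
Proof.
  intros Ha HC He' Hle HM. destruct (Rle_lt_dec a 1) as [Ha1 | Ha1].
  - apply Rle_trans with 1; [apply rpow_le_1; lra | apply Rmax_l].
  - rewrite rpow_pos in * by lra.
    apply Rle_trans with (Rpower (Rmax 1 M) C0); [| apply Rmax_r].
    apply Rle_trans with (Rpower (Rpower a e) C0).
    + rewrite Rpower_mult, Rmult_comm. apply Rle_Rpower; lra.
    + apply Rle_Rpower_l; [lra | split].
      * apply exp_pos.
      * apply Rle_trans with M; [lra | apply Rmax_r].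
Qed.

Lemma A_eps_incl_of_dominated (eps eps' : nat -> R) :
  (forall n, 0 <= eps' n) -> dominated eps eps' ->
  forall x : nat -> C, A_eps eps x -> A_eps eps' x.
Proof.
  intros He' [C0 [HC Hle]] x [M HM].
  exists (Rmax 1 (Rpower (Rmax 1 M) C0)). intro n.
  apply rpow_le_scale with (eps n); [apply Cmod_ge_0 | lra | auto | auto | auto].
Qed.

Lemma rpow_Cmod_exp (t e : R) : rpow (Cmod (RtoC (exp t))) e = exp (e * t).
Proof.
  rewrite Cmod_R, Rabs_pos_eq by (left; apply exp_pos).
  rewrite rpow_pos by apply exp_pos.
  now unfold Rpower; rewrite ln_exp.
Qed.

Lemma dominated_of_A_eps_incl (eps eps' : nat -> R) :
  (forall n, 0 < eps n) ->
  (forall x : nat -> C, A_eps eps x -> A_eps eps' x) -> dominated eps eps'.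
Proof.
  intros He Hincl.
  set (x := fun n => RtoC (exp (/ eps n))).
  destruct (Hincl x) as [M HM].
  { exists (exp 1). intro n. unfold x. rewrite rpow_Cmod_exp, Rinv_r.
    - apply Rle_refl.
    - apply Rgt_not_eq, He. }
  exists (Rmax 1 (ln M)). split; [apply Rlt_le_trans with 1; [lra | apply Rmax_l] |].
  intro n. specialize (HM n). unfold x in HM. rewrite rpow_Cmod_exp in HM.
  pose proof (He n).
  assert (Hratio : eps' n / eps n <= ln M).
  { rewrite <- (ln_exp (eps' n / eps n)). apply ln_le; [apply exp_pos | exact HM]. }
  replace (eps' n) with (eps' n / eps n * eps n) by (field; lra).
  apply Rmult_le_compat_r; [lra |].
  apply Rle_trans with (ln M); [exact Hratio | apply Rmax_r].
Qed.

Lemma A_eps_incl_iff_dominated (eps eps' : nat -> R) :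
  (forall n, 0 < eps n) -> (forall n, 0 < eps' n) ->
  (forall x : nat -> C, A_eps eps x -> A_eps eps' x) <-> dominated eps eps'.
Proof.
  intros He He'. split.
  - now apply dominated_of_A_eps_incl.
  - apply A_eps_incl_of_dominated. intro n; left; apply He'.
Qed.

Lemma dominated_both_iff (eps eps' : nat -> R) :
  (forall n, 0 <= eps n) -> (forall n, 0 <= eps' n) ->
  dominated eps eps' /\ dominated eps' eps <->
  exists C0 : R, 0 < C0 /\
    forall n, / C0 * eps n <= eps' n /\ eps' n <= C0 * eps n.
Proof.
  intros He He'. split.
  - intros [[C1 [HC1 H1]] [C2 [HC2 H2]]].
    pose proof (Rmax_l C1 C2); pose proof (Rmax_r C1 C2).
    exists (Rmax C1 C2). split; [lra |]. intro n.
    specialize (H1 n); specialize (H2 n); specialize (He n); specialize (He' n).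
    split; [| nra].
    apply Rmult_le_reg_l with (Rmax C1 C2); [lra |].
    rewrite <- Rmult_assoc, Rinv_r by lra. nra.
  - intros [C0 [HC Hn]]. split; exists C0; split; auto; intro n.
    + apply Hn.
    + destruct (Hn n) as [Hlow _].
      apply Rmult_le_reg_l with (/ C0); [apply Rinv_0_lt_compat; lra |].
      rewrite <- Rmult_assoc, Rinv_l by lra. lra.
Qed.

Theorem mainTheorem9 (eps eps' : nat -> R) :
  admissible eps -> admissible eps' ->
  ((forall x : nat -> C, A_eps eps x -> A_eps eps' x) <->
     (exists C0 : R, 0 < C0 /\ forall n, eps' n <= C0 * eps n)) /\
  ((forall x : nat -> C, A_eps eps x <-> A_eps eps' x) <->
     (exists C0 : R, 0 < C0 /\
        forall n, / C0 * eps n <= eps' n /\ eps' n <= C0 * eps n)).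
Proof.
  intros He He'.
  assert (Hpos : forall n, 0 < eps n) by (intro n; apply He).
  assert (Hpos' : forall n, 0 < eps' n) by (intro n; apply He').
  split; [now apply A_eps_incl_iff_dominated |].
  rewrite <- dominated_both_iff by (intro n; left; auto).
  rewrite <- (A_eps_incl_iff_dominated eps eps'), <- (A_eps_incl_iff_dominated eps' eps) by auto.
  split.
  - intro Heq. split; intro x; apply Heq.
  - intros [Hsub Hsup] x. split; [apply Hsub | apply Hsup].
Qed.
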